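(* Let $(X,p)$ and $(Y,d)$ be complete separable metric spaces and let $F: X \Rightarrow Y$ be a multi-valued function whose graph is an analytic subset of $X \times Y$. Then the set of points of strong continuity of $F$ is a co-analytic subset of $X$.
   Context: A multi-valued function $F: X \Rightarrow Y$ assigns to each $x$ a nonempty set $F(x)\subseteq Y$; its graph is $\{(x,y): y\in F(x)\}$. $F$ is strongly continuous at $x$ if for every $y \in F(x)$ and every $\varepsilon>0$ there is $\delta>0$ such that for every $x' \in B_p(x,\delta)$ there is $y' \in F(x')$ with $d(y,y')<\varepsilon$. A subset of a complete separable metric space is analytic if it is a continuous image of a closed subset of a complete separable metric space, and co-analytic if its complement is analytic. *)

From Stdlib Require Import Reals.
Open Scope R_scope.

Definition is_metric {T : Type} (d : T -> T -> R) : Prop :=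
  (forall x y, 0 <= d x y) /\
  (forall x y, d x y = 0 <-> x = y) /\
  (forall x y, d x y = d y x) /\
  (forall x y z, d x z <= d x y + d y z).

Definition cauchy_seq {T : Type} (d : T -> T -> R) (u : nat -> T) : Prop :=
  forall eps, 0 < eps -> exists N, forall m n, (N <= m)%nat -> (N <= n)%nat ->
    d (u m) (u n) < eps.

Definition seq_converges_to {T : Type} (d : T -> T -> R) (u : nat -> T) (l : T) : Prop :=
  forall eps, 0 < eps -> exists N, forall n, (N <= n)%nat -> d (u n) l < eps.

Definition complete_metric {T : Type} (d : T -> T -> R) : Prop :=
  forall u : nat -> T, cauchy_seq d u -> exists l, seq_converges_to d u l.

(* separable: there is a countable dense subset (the option type allows
   the empty space). *)
Definition separable_metric {T : Type} (d : T -> T -> R) : Prop :=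
  exists s : nat -> option T, forall x eps, 0 < eps ->
    exists n y, s n = Some y /\ d x y < eps.

Definition polish_metric {T : Type} (d : T -> T -> R) : Prop :=
  is_metric d /\ complete_metric d /\ separable_metric d.

Definition closed_set {T : Type} (d : T -> T -> R) (C : T -> Prop) : Prop :=
  forall x, (forall eps, 0 < eps -> exists y, C y /\ d x y < eps) -> C x.

Definition continuous_on {W Z : Type} (dW : W -> W -> R) (dZ : Z -> Z -> R)
  (C : W -> Prop) (f : W -> Z) : Prop :=
  forall w, C w -> forall eps, 0 < eps -> exists delta, 0 < delta /\
    forall w', C w' -> dW w w' < delta -> dZ (f w) (f w') < eps.

Definition analytic {Z : Type} (dZ : Z -> Z -> R) (A : Z -> Prop) : Prop :=
  exists (W : Type) (dW : W -> W -> R) (C : W -> Prop) (f : W -> Z),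
    polish_metric dW /\ closed_set dW C /\ continuous_on dW dZ C f /\
    (forall z, A z <-> exists w, C w /\ f w = z).

Definition coanalytic {Z : Type} (dZ : Z -> Z -> R) (A : Z -> Prop) : Prop :=
  analytic dZ (fun z => ~ A z).

Definition prod_dist {X Y : Type} (dX : X -> X -> R) (dY : Y -> Y -> R)
  (a b : X * Y) : R := Rmax (dX (fst a) (fst b)) (dY (snd a) (snd b)).

(* A multi-valued function F : X => Y is a relation F x y meaning y \in F(x);
   its graph is {(x,y) | F x y}. *)
Definition graph {X Y : Type} (F : X -> Y -> Prop) : X * Y -> Prop :=
  fun z => F (fst z) (snd z).

Definition strongly_continuous_at {X Y : Type} (p : X -> X -> R) (d : Y -> Y -> R)
  (F : X -> Y -> Prop) (x : X) : Prop :=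
  forall y, F x y -> forall eps, 0 < eps -> exists delta, 0 < delta /\
    forall x', p x x' < delta -> exists y', F x' y' /\ d y y' < eps.

From Stdlib Require Import Reals Lra Lia Classical Cantor.
(* After Reals, so that [closed_set] is the one of Defs and not of Rtopology. *)
From Pilot Require Import Defs.
Open Scope R_scope.

(* A point x fails to be a point of strong continuity iff there are y in F(x),
   a point c of a countable dense set and a radius r = 1/(k+1) with d(c,y) <= r
   such that x lies in the closure of the set of points x' whose whole value
   F(x') avoids the open ball B(c,2r).  For fixed (c,k), the parameters w of the
   graph (a continuous image f(w) of a closed set) satisfying this condition at
   f(w) form a closed set; gluing these countably many closed pieces along the
   discrete space nat exhibits the complement as an analytic set. *)

Definition nat_dist (a b : nat) : R := if Nat.eqb a b then 0 else 1.

Lemma nat_dist_lt1 a b : nat_dist a b < 1 -> a = b.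
Proof.
  unfold nat_dist; destruct (Nat.eqb_spec a b); [easy | lra].
Qed.

Lemma nat_dist_polish : polish_metric nat_dist.
Proof.
  unfold nat_dist; split; [|split].
  - split; [|split; [|split]].
    + intros a b; destruct (Nat.eqb_spec a b); lra.
    + intros a b; destruct (Nat.eqb_spec a b); split; intros; easy || lra.
    + intros a b; destruct (Nat.eqb_spec a b), (Nat.eqb_spec b a); congruence.
    + intros a b c; destruct (Nat.eqb_spec a c), (Nat.eqb_spec a b),
        (Nat.eqb_spec b c); subst; try lra; easy.
  - intros u Hu; destruct (Hu 1 Rlt_0_1) as [N HN].
    exists (u N); intros eps Heps; exists N; intros n Hn.
    rewrite (nat_dist_lt1 _ _ (HN n N Hn (le_n N))), Nat.eqb_refl; exact Heps.
  - exists Some; intros a eps Heps; exists a, a.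
    rewrite Nat.eqb_refl; split; [easy | exact Heps].
Qed.

Section ProductMetric.

Context {A B : Type} (dA : A -> A -> R) (dB : B -> B -> R).

Lemma prod_dist_fst a b : dA (fst a) (fst b) <= prod_dist dA dB a b.
Proof. apply Rmax_l. Qed.

Lemma prod_dist_snd a b : dB (snd a) (snd b) <= prod_dist dA dB a b.
Proof. apply Rmax_r. Qed.

Lemma prod_dist_lt a b eps :
  dA (fst a) (fst b) < eps -> dB (snd a) (snd b) < eps -> prod_dist dA dB a b < eps.
Proof. apply Rmax_lub_lt. Qed.

Lemma prod_dist_metric : is_metric dA -> is_metric dB -> is_metric (prod_dist dA dB).
Proof.
  intros [A0 [A1 [A2 A3]]] [B0 [B1 [B2 B3]]].
  split; [|split; [|split]].
  - intros a b; pose proof (A0 (fst a) (fst b)); pose proof (prod_dist_fst a b); lra.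
  - intros [a1 b1] [a2 b2]; split.
    + intros E.
      pose proof (prod_dist_fst (a1, b1) (a2, b2)); pose proof (prod_dist_snd (a1, b1) (a2, b2)).
      pose proof (A0 a1 a2); pose proof (B0 b1 b2); simpl in *.
      rewrite (proj1 (A1 a1 a2)), (proj1 (B1 b1 b2)) by lra; reflexivity.
    + intros E; injection E as -> ->; unfold prod_dist; simpl.
      rewrite (proj2 (A1 a2 a2) eq_refl), (proj2 (B1 b2 b2) eq_refl).
      apply Rmax_left; lra.
  - intros a b; unfold prod_dist; rewrite A2, B2; reflexivity.
  - intros a b c; apply Rmax_lub.
    + pose proof (A3 (fst a) (fst b) (fst c));
        pose proof (prod_dist_fst a b); pose proof (prod_dist_fst b c); lra.
    + pose proof (B3 (snd a) (snd b) (snd c));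
        pose proof (prod_dist_snd a b); pose proof (prod_dist_snd b c); lra.
Qed.

Lemma prod_dist_complete :
  complete_metric dA -> complete_metric dB -> complete_metric (prod_dist dA dB).
Proof.
  intros HA HB u Hu.
  destruct (HA (fun n => fst (u n))) as [la Hla].
  { intros eps Heps; destruct (Hu eps Heps) as [N HN]; exists N; intros m n Hm Hn.
    pose proof (HN m n Hm Hn); pose proof (prod_dist_fst (u m) (u n)); lra. }
  destruct (HB (fun n => snd (u n))) as [lb Hlb].
  { intros eps Heps; destruct (Hu eps Heps) as [N HN]; exists N; intros m n Hm Hn.
    pose proof (HN m n Hm Hn); pose proof (prod_dist_snd (u m) (u n)); lra. }
  exists (la, lb); intros eps Heps.
  destruct (Hla eps Heps) as [Na HNa], (Hlb eps Heps) as [Nb HNb].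
  exists (max Na Nb); intros n Hn; apply prod_dist_lt; [apply HNa | apply HNb]; lia.
Qed.

Lemma prod_dist_separable :
  separable_metric dA -> separable_metric dB -> separable_metric (prod_dist dA dB).
Proof.
  intros [sA HsA] [sB HsB].
  exists (fun m => let (i, j) := Cantor.of_nat m in
    match sA i, sB j with Some a, Some b => Some (a, b) | _, _ => None end).
  intros [a b] eps Heps.
  destruct (HsA a eps Heps) as [i [a' [Ei Ha]]], (HsB b eps Heps) as [j [b' [Ej Hb]]].
  exists (Cantor.to_nat (i, j)), (a', b').
  rewrite Cantor.cancel_of_to, Ei, Ej; split; [reflexivity | now apply prod_dist_lt].
Qed.

Lemma prod_dist_polish :
  polish_metric dA -> polish_metric dB -> polish_metric (prod_dist dA dB).
Proof.
  intros [MA [CA SA]] [MB [CB SB]]; split; [|split].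
  - now apply prod_dist_metric.
  - now apply prod_dist_complete.
  - now apply prod_dist_separable.
Qed.

End ProductMetric.

Definition adherent {T : Type} (d : T -> T -> R) (S : T -> Prop) (x : T) : Prop :=
  forall eps, 0 < eps -> exists y, S y /\ d x y < eps.

Lemma closed_set_ext {T : Type} (d : T -> T -> R) (S S' : T -> Prop) :
  (forall x, S x <-> S' x) -> closed_set d S -> closed_set d S'.
Proof.
  intros E HS x Hx; apply E, HS; intros eps Heps.
  destruct (Hx eps Heps) as [y [Hy Hxy]]; exists y; split; [now apply E | exact Hxy].
Qed.

Lemma closed_set_and {T : Type} (d : T -> T -> R) (S S' : T -> Prop) :
  closed_set d S -> closed_set d S' -> closed_set d (fun x => S x /\ S' x).
Proof.
  intros HS HS' x Hx; split; [apply HS | apply HS']; intros eps Heps;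
    destruct (Hx eps Heps) as [y [[Hy Hy'] Hxy]]; eauto.
Qed.

Lemma closed_set_empty {T : Type} (d : T -> T -> R) : closed_set d (fun _ => False).
Proof. intros x Hx; now destruct (Hx 1 Rlt_0_1) as [y [[] _]]. Qed.

Lemma closed_set_adherent {T : Type} (d : T -> T -> R) (S : T -> Prop) :
  is_metric d -> closed_set d (adherent d S).
Proof.
  intros [_ [_ [_ Htri]]] x Hx eps Heps.
  destruct (Hx (eps / 2) ltac:(lra)) as [x' [Hx' Hxx']].
  destruct (Hx' (eps / 2) ltac:(lra)) as [y [Hy Hx'y]].
  exists y; split; [exact Hy|]; pose proof (Htri x x' y); lra.
Qed.

Lemma closed_set_closed_ball {T : Type} (d : T -> T -> R) (c : T) (r : R) :
  is_metric d -> closed_set d (fun y => d c y <= r).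
Proof.
  intros [_ [_ [Hsym Htri]]] y Hy.
  apply Rnot_lt_le; intros Hr.
  destruct (Hy (d c y - r) ltac:(lra)) as [y' [Hy' Hyy']].
  pose proof (Htri c y' y); rewrite (Hsym y' y) in *; lra.
Qed.

Lemma closed_set_preimage {W Z : Type} (dW : W -> W -> R) (dZ : Z -> Z -> R)
    (C : W -> Prop) (f : W -> Z) (K : Z -> Prop) :
  closed_set dW C -> continuous_on dW dZ C f -> closed_set dZ K ->
  closed_set dW (fun w => C w /\ K (f w)).
Proof.
  intros HC Hf HK w Hw.
  assert (Cw : C w).
  { apply HC; intros eps Heps; destruct (Hw eps Heps) as [w' [[Cw' _] H]]; eauto. }
  split; [exact Cw|]; apply HK; intros eps Heps.
  destruct (Hf w Cw eps Heps) as [delta [Hdelta Hcont]].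
  destruct (Hw delta Hdelta) as [w' [[Cw' Kw'] Hww']].
  exists (f w'); split; [exact Kw' | now apply Hcont].
Qed.

Lemma continuous_on_contraction {W Z Z' : Type} (dW : W -> W -> R)
    (dZ : Z -> Z -> R) (dZ' : Z' -> Z' -> R) (C : W -> Prop) (f : W -> Z) (g : Z -> Z') :
  (forall a b, dZ' (g a) (g b) <= dZ a b) ->
  continuous_on dW dZ C f -> continuous_on dW dZ' C (fun w => g (f w)).
Proof.
  intros Hg Hf w Cw eps Heps.
  destruct (Hf w Cw eps Heps) as [delta [Hdelta Hcont]].
  exists delta; split; [exact Hdelta|]; intros w' Cw' Hww'.
  pose proof (Hcont w' Cw' Hww'); pose proof (Hg (f w) (f w')); lra.
Qed.

Lemma analytic_of_closed_pieces {W Z : Type} (dW : W -> W -> R) (dZ : Z -> Z -> R)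
    (C : W -> Prop) (f : W -> Z) (D : nat -> W -> Prop) (S : Z -> Prop) :
  polish_metric dW -> continuous_on dW dZ C f ->
  (forall n, closed_set dW (fun w => C w /\ D n w)) ->
  (forall z, S z <-> exists n w, C w /\ D n w /\ f w = z) ->
  analytic dZ S.
Proof.
  intros HW Hf HD HS.
  exists (nat * W)%type, (prod_dist nat_dist dW),
    (fun a => C (snd a) /\ D (fst a) (snd a)), (fun a => f (snd a)).
  split; [apply prod_dist_polish; [exact nat_dist_polish | exact HW]|].
  split; [|split].
  - intros [n w] Hw; apply (HD n); intros eps Heps.
    destruct (Hw (Rmin eps 1)) as [[n' w'] [Hw' Hdist]].
    { apply Rmin_glb_lt; lra. }
    pose proof (Rmin_l eps 1); pose proof (Rmin_r eps 1).
    pose proof (prod_dist_fst nat_dist dW (n, w) (n', w')).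
    pose proof (prod_dist_snd nat_dist dW (n, w) (n', w')); simpl in *.
    replace n' with n in * by (apply nat_dist_lt1; lra).
    exists w'; split; [exact Hw' | lra].
  - intros [n w] [Cw _] eps Heps.
    destruct (Hf w Cw eps Heps) as [delta [Hdelta Hcont]].
    exists delta; split; [exact Hdelta|]; intros [n' w'] [Cw' _] Hdist.
    apply Hcont; [exact Cw'|].
    pose proof (prod_dist_snd nat_dist dW (n, w) (n', w')); simpl in *; lra.
  - intros z; rewrite HS; split.
    + intros [n [w [Cw [Dw <-]]]]; now exists (n, w).
    + intros [[n w] [[Cw Dw] <-]]; now exists n, w.
Qed.

Definition inv_succ (k : nat) : R := / (INR k + 1).

Lemma inv_succ_pos k : 0 < inv_succ k.
Proof. apply Rinv_0_lt_compat; pose proof (pos_INR k); lra. Qed.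

Lemma inv_succ_lt eps : 0 < eps -> exists k, inv_succ k < eps.
Proof.
  intros Heps; destruct (archimed_cor1 eps Heps) as [k [Hk Hk0]].
  exists k; apply Rle_lt_trans with (/ INR k); [|exact Hk].
  apply Rlt_le, Rinv_lt_contravar; [|lra].
  apply lt_0_INR in Hk0; nra.
Qed.

Section StrongContinuity.

Context {X Y : Type} (p : X -> X -> R) (d : Y -> Y -> R) (F : X -> Y -> Prop).
Hypothesis d_metric : is_metric d.

Definition avoids_ball (c : Y) (r : R) (x : X) : Prop :=
  forall y, F x y -> r <= d c y.

Lemma not_strongly_continuous_of_witness x y c r :
  0 < r -> F x y -> d c y <= r -> adherent p (avoids_ball c (2 * r)) x ->
  ~ strongly_continuous_at p d F x.
Proof.
  destruct d_metric as [_ [_ [_ Htri]]].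
  intros Hr Fxy Hcy Hx Hsc.
  destruct (Hsc y Fxy r Hr) as [delta [Hdelta Hnear]].
  destruct (Hx delta Hdelta) as [x' [Hx' Hxx']].
  destruct (Hnear x' Hxx') as [y' [Fx'y' Hyy']].
  pose proof (Hx' y' Fx'y'); pose proof (Htri c y y'); lra.
Qed.

Lemma witness_of_not_strongly_continuous (s : nat -> option Y) x :
  (forall y eps, 0 < eps -> exists n c, s n = Some c /\ d y c < eps) ->
  ~ strongly_continuous_at p d F x ->
  exists n k c y, s n = Some c /\ F x y /\ d c y <= inv_succ k /\
    adherent p (avoids_ball c (2 * inv_succ k)) x.
Proof.
  destruct d_metric as [_ [_ [Hsym Htri]]].
  intros Hs Hnsc.
  apply not_all_ex_not in Hnsc as [y Hnsc]; apply imply_to_and in Hnsc as [Fxy Hnsc].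
  apply not_all_ex_not in Hnsc as [eps Hnsc]; apply imply_to_and in Hnsc as [Heps Hnsc].
  destruct (inv_succ_lt (eps / 3) ltac:(lra)) as [k Hk]; pose proof (inv_succ_pos k).
  destruct (Hs y (inv_succ k) ltac:(assumption)) as [n [c [Hc Hyc]]].
  exists n, k, c, y; split; [exact Hc|]; split; [exact Fxy|]; split; [rewrite Hsym; lra|].
  (* Every delta-neighbourhood of x contains some x' with F(x') outside B(y,eps),
     hence outside B(c, 2/(k+1)) since d(y,c) < eps/3. *)
  intros delta Hdelta; apply NNPP; intros Hno; apply Hnsc.
  exists delta; split; [exact Hdelta|]; intros x' Hxx'.
  apply NNPP; intros Hfar; apply Hno; exists x'; split; [|exact Hxx'].
  intros y' Fx'y'.
  assert (eps <= d y y') by (apply Rnot_lt_le; intros Hlt; apply Hfar; eauto).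
  pose proof (Htri y c y'); lra.
Qed.

Context {W : Type} (dW : W -> W -> R) (C : W -> Prop) (f : W -> X * Y).
Hypotheses (p_metric : is_metric p) (C_closed : closed_set dW C)
  (f_continuous : continuous_on dW (prod_dist p d) C f).

Lemma closed_set_witnesses c r :
  closed_set dW (fun w => C w /\
    (d c (snd (f w)) <= r /\ adherent p (avoids_ball c (2 * r)) (fst (f w)))).
Proof.
  apply closed_set_ext with
    (fun w => (C w /\ d c (snd (f w)) <= r) /\ (C w /\ adherent p (avoids_ball c (2 * r)) (fst (f w)))).
  { intros w; tauto. }
  apply closed_set_and.
  - apply (closed_set_preimage dW d C (fun w => snd (f w)) (fun y => d c y <= r)).
    + exact C_closed.
    + apply continuous_on_contraction with (dZ := prod_dist p d);
        [apply prod_dist_snd | exact f_continuous].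
    + now apply closed_set_closed_ball.
  - apply (closed_set_preimage dW p C (fun w => fst (f w))
      (adherent p (avoids_ball c (2 * r)))).
    + exact C_closed.
    + apply continuous_on_contraction with (dZ := prod_dist p d);
        [apply prod_dist_fst | exact f_continuous].
    + now apply closed_set_adherent.
Qed.

End StrongContinuity.

Theorem proposition3p4 (X Y : Type) (p : X -> X -> R) (d : Y -> Y -> R)
  (F : X -> Y -> Prop) :
  polish_metric p -> polish_metric d ->
  (forall x, exists y, F x y) ->
  analytic (prod_dist p d) (graph F) ->
  coanalytic p (fun x => strongly_continuous_at p d F x).
Proof.
  (* The values of F need not be nonempty. *)
  intros [Hp _] [Hd [_ [s Hs]]] _ [W [dW [C [f [HW [HC [Hf Hgraph]]]]]]].
  pose (D m w := let (n, k) := Cantor.of_nat m in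
    match s n with
    | Some c => d c (snd (f w)) <= inv_succ k /\
                adherent p (avoids_ball d F c (2 * inv_succ k)) (fst (f w))
    | None => False
    end).
  apply (analytic_of_closed_pieces dW p C (fun w => fst (f w)) D).
  - exact HW.
  - apply continuous_on_contraction with (dZ := prod_dist p d);
      [apply prod_dist_fst | exact Hf].
  - intros m; unfold D; destruct (Cantor.of_nat m) as [n k], (s n) as [c|].
    + now apply closed_set_witnesses.
    + apply closed_set_ext with (fun _ => False); [tauto | apply closed_set_empty].
  - intros x; split.
    + intros Hnsc.
      destruct (witness_of_not_strongly_continuous p d F Hd s x Hs Hnsc)
        as [n [k [c [y [Hc [Fxy [Hcy Hx]]]]]]].
      destruct (proj1 (Hgraph (x, y)) Fxy) as [w [Cw Hw]].
      exists (Cantor.to_nat (n, k)), w; unfold D.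
      rewrite Cantor.cancel_of_to, Hc, Hw; auto.
    + intros [m [w [Cw [Dw Hx]]]]; unfold D in Dw.
      destruct (Cantor.of_nat m) as [n k], (s n) as [c|]; [|contradiction].
      destruct Dw as [Hcy Hadh]; rewrite <- Hx.
      apply (not_strongly_continuous_of_witness p d F Hd _ (snd (f w)) c (inv_succ k));
        [apply inv_succ_pos | apply (Hgraph (f w)); eauto | exact Hcy | exact Hadh].
Qed.
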